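(* Let $G, G'$ be two distinct spanning trees of $K_{n,d}$ and let $e\in G$, $e'\in G'$ be edges such that $G\setminus e = G'\setminus e' = H$. Let the two connected components of $H$ have vertex sets $I^{(1)}\sqcup \bar J^{(1)}$ and $I^{(2)}\sqcup \bar J^{(2)}$ (with $I^{(k)}\subseteq[n]$, $\bar J^{(k)}\subseteq[\bar d]$). Then $G$ and $G'$ are compatible if and only if either ($e$ joins a vertex of $I^{(1)}$ to a vertex of $\bar J^{(2)}$ and $e'$ joins a vertex of $I^{(2)}$ to a vertex of $\bar J^{(1)}$) or ($e$ joins $I^{(2)}$ to $\bar J^{(1)}$ and $e'$ joins $I^{(1)}$ to $\bar J^{(2)}$). In particular, if $G$ and $G'$ are compatible then $e$ and $e'$ share no vertex.
   Context: Fix positive integers $n,d$. $K_{n,d}$ denotes the complete bipartite graph with left vertex set $[n]=\{1,\dots,n\}$ and right vertex set $[\bar d]=\{\bar 1,\dots,\bar d\}$; all graphs considered are subgraphs of $K_{n,d}$ (identified with their edge sets). Two acyclic subgraphs $G,G'$ of $K_{n,d}$ are called compatible if whenever both $G$ and $G'$ contain a perfect matching between the same pair of vertex sets $I\subseteq[n]$ and $\bar J\subseteq[\bar d]$, these two matchings are equal. *)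

From mathcomp Require Import all_boot.
Set Implicit Arguments. Unset Strict Implicit. Unset Printing Implicit Defensive.

(* Left vertices [n] are 'I_n, right vertices [\bar d] are 'I_d.
   A subgraph of K_{n,d} is identified with its edge set, a set of pairs
   (i, j) meaning the edge {i, \bar j}. *)
Definition edge (n d : nat) := ('I_n * 'I_d)%type.
Definition graph (n d : nat) := {set edge n d}.
Definition vertex (n d : nat) := ('I_n + 'I_d)%type.

Definition adj n d (G : graph n d) : rel (vertex n d) :=
  fun u v => match u, v with
             | inl i, inr j => (i, j) \in G
             | inr j, inl i => (i, j) \in G
             | _, _ => false
             end.

Definition acyclic n d (G : graph n d) : Prop :=
  forall p : seq (vertex n d), uniq p -> 3 <= size p -> ~~ cycle (adj G) p.

Definition connected_graph n d (G : graph n d) : Prop :=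
  forall u v : vertex n d, connect (adj G) u v.

Definition spanning_tree n d (G : graph n d) : Prop :=
  acyclic G /\ connected_graph G.

Definition vset n d (I : {set 'I_n}) (J : {set 'I_d}) : {set vertex n d} :=
  [set inl i | i in I] :|: [set inr j | j in J].

Definition is_component n d (H : graph n d) (S : {set vertex n d}) : Prop :=
  exists2 x, x \in S & S = [set y | connect (adj H) x y].

Definition perfect_matching n d (I : {set 'I_n}) (J : {set 'I_d})
  (M : graph n d) : Prop :=
  [/\ M \subset setX I J,
      forall i, i \in I -> #|[set e in M | e.1 == i]| = 1
    & forall j, j \in J -> #|[set e in M | e.2 == j]| = 1].

Definition compatible n d (G G' : graph n d) : Prop :=
  forall (I : {set 'I_n}) (J : {set 'I_d}) (M M' : graph n d),
    M \subset G -> M' \subset G' ->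
    perfect_matching I J M -> perfect_matching I J M' -> M = M'.

From mathcomp Require Import all_boot zify.
Set Implicit Arguments. Unset Strict Implicit. Unset Printing Implicit Defensive.

(* An acyclic graph contains at most one perfect matching between given I
   and J: following M from left vertices and M' from right vertices is a
   permutation of the vertices, and an orbit through an edge of M outside M'
   would be a cycle of length at least 3.  Since G and G' share H, a matching
   of G avoiding e and a matching of G' avoiding e' both lie in the tree G.
   If e and e' cross between the components of H in opposite directions,
   comparing #|I :&: I^(1)| with #|J :&: J^(1)| shows that no perfect matching
   of G' uses e'.  If they cross in the same direction, the H-paths joining
   their endpoints close up with e and e' into a cycle of G u G' whose two
   perfect matchings lie in G and in G' and differ at e. *)

Section Components.
Variables n d : nat.
Implicit Types (G H K : graph n d) (f : edge n d) (u v : vertex n d).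
Implicit Types (I : {set 'I_n}) (J : {set 'I_d}) (C : {set vertex n d}).

Lemma adj_sym G : symmetric (adj G).
Proof. by move=> [?|?] [?|?]. Qed.

Lemma connect_adj_sym G : connect_sym (adj G).
Proof. exact/sym_connect_sym/adj_sym. Qed.

Lemma adj_subset G G' : G \subset G' -> subrel (adj G) (adj G').
Proof. by move/subsetP=> sGG' [?|?] [?|?] //= /sGG'. Qed.

Lemma adj_setD1 G f u v : adj G u v ->
  adj (G :\ f) u v \/ [set u; v] = [set inl f.1; inr f.2].
Proof.
case: f => a b; case: u v => [i|j] [i'|j'] //= uv.
- have [[-> ->]|ne] := eqVneq (i, j') (a, b); first by right.
  by left; rewrite !inE ne.
- have [[-> ->]|ne] := eqVneq (i', j) (a, b); first by right; rewrite setUC.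
  by left; rewrite !inE ne.
Qed.

Lemma in_vset_l I J i : (inl i \in vset I J) = (i \in I).
Proof.
by rewrite !inE; apply/orP/idP => [[/imsetP[k kI [->]] | /imsetP[]] // | iI];
  left; apply/imsetP; exists i.
Qed.

Lemma in_vset_r I J j : (inr j \in vset I J) = (j \in J).
Proof.
by rewrite !inE; apply/orP/idP => [[/imsetP[] | /imsetP[k kJ [->]]] // | jJ];
  right; apply/imsetP; exists j.
Qed.

Lemma component_closed H C : is_component H C -> closed (adj H) C.
Proof.
move=> [x _ ->] u v uv; rewrite !inE.
exact/(connect_closed (connect_adj_sym H)).
Qed.

Lemma mem_component H C u v :
  is_component H C -> u \in C -> (v \in C) = connect (adj H) u v.
Proof.
move=> [x _ ->]; rewrite !inE => xu.
exact: (same_connect (connect_adj_sym H)).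
Qed.

Lemma component_connect H C u v :
  is_component H C -> u \in C -> v \in C -> connect (adj H) u v.
Proof. by move=> compC uC; rewrite (mem_component _ compC uC). Qed.

Lemma component_apart H C u v :
  is_component H C -> u \in C -> v \notin C -> ~~ connect (adj H) u v.
Proof. by move=> compC uC; rewrite (mem_component _ compC uC). Qed.

Lemma component_edge H I J h :
  is_component H (vset I J) -> h \in H -> (h.1 \in I) = (h.2 \in J).
Proof.
move=> /component_closed clC hH; rewrite -(in_vset_l I J) -(in_vset_r I J).
by apply: clC; rewrite /= -surjective_pairing.
Qed.

Lemma components_disjoint H C C' u :
  is_component H C -> is_component H C' -> C != C' -> u \in C -> u \notin C'.
Proof.
move=> compC compC' neCC' uC; apply: contra neCC' => uC'.
apply/eqP/setP => v.
by rewrite (mem_component _ compC uC) (mem_component _ compC' uC').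
Qed.

Lemma edge_crosses K f C y : connected_graph K ->
  is_component (K :\ f) C -> y \notin C -> (inl f.1 \in C) != (inr f.2 \in C).
Proof.
move=> conK compC yC; apply: contra yC => /eqP same_f.
have [x xC _] := compC.
suff clK : closed (adj K) C by rewrite -(closed_connect clK (conK x y)).
move=> u v /(adj_setD1 f) [uv | Euv]; first exact: component_closed compC _ _ uv.
have mem_f w : w \in [set u; v] -> (w \in C) = (inl f.1 \in C).
  by rewrite Euv !inE => /orP[] /eqP ->.
by rewrite (mem_f u) ?(mem_f v) // !inE eqxx ?orbT.
Qed.

Lemma edge_between_components K f I1 J1 I2 J2 : connected_graph K ->
  is_component (K :\ f) (vset I1 J1) -> is_component (K :\ f) (vset I2 J2) ->
  vset I1 J1 != vset I2 J2 ->
  [/\ (f.1 \in I2) = (f.1 \notin I1), (f.2 \in J2) = (f.2 \notin J1)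
    & (f.2 \in J1) = (f.1 \notin I1)].
Proof.
move=> conK C1 C2 C12; have [x1 x1C1 _] := C1; have [x2 x2C2 _] := C2.
have C21 : vset I2 J2 != vset I1 J1 by rewrite eq_sym.
have := edge_crosses conK C1 (components_disjoint C2 C1 C21 x2C2).
have := edge_crosses conK C2 (components_disjoint C1 C2 C12 x1C1).
have /implyP := components_disjoint C1 C2 C12 (u := inl f.1).
have /implyP := components_disjoint C1 C2 C12 (u := inr f.2).
rewrite !in_vset_l !in_vset_r.
by case: (f.1 \in I1); case: (f.1 \in I2); case: (f.2 \in J1); case: (f.2 \in J2).
Qed.

End Components.

Definition mate_l n d (M : graph n d) (i : 'I_n) := [pick j | (i, j) \in M].
Definition mate_r n d (M : graph n d) (j : 'I_d) := [pick i | (i, j) \in M].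

Lemma mate_l_some n d (M : graph n d) i j : mate_l M i = Some j -> (i, j) \in M.
Proof. by rewrite /mate_l; case: pickP => // k kM [<-]. Qed.

Lemma mate_r_some n d (M : graph n d) i j : mate_r M j = Some i -> (i, j) \in M.
Proof. by rewrite /mate_r; case: pickP => // k kM [<-]. Qed.

Section PerfectMatching.
Variables (n d : nat) (I : {set 'I_n}) (J : {set 'I_d}) (M : graph n d).
Hypothesis pM : perfect_matching I J M.

Lemma matching_memI i j : (i, j) \in M -> i \in I.
Proof. by case: pM => /subsetP sM _ _ /sM; rewrite inE => /andP[]. Qed.

Lemma matching_memJ i j : (i, j) \in M -> j \in J.
Proof. by case: pM => /subsetP sM _ _ /sM; rewrite inE => /andP[]. Qed.

Lemma matching_uniq_r i j j' : (i, j) \in M -> (i, j') \in M -> j = j'.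
Proof.
move=> ij ij'; case: pM => _ /(_ i (matching_memI ij)) card1 _.
have /card_le1_eqP uniqM : #|[set h in M | h.1 == i]| <= 1 by rewrite card1.
by have := uniqM (i, j) (i, j'); rewrite !inE ij ij' eqxx => /(_ isT isT) [].
Qed.

Lemma matching_uniq_l i i' j : (i, j) \in M -> (i', j) \in M -> i = i'.
Proof.
move=> ij i'j; case: pM => _ _ /(_ j (matching_memJ ij)) card1.
have /card_le1_eqP uniqM : #|[set h in M | h.2 == j]| <= 1 by rewrite card1.
by have := uniqM (i, j) (i', j); rewrite !inE ij i'j eqxx => /(_ isT isT) [].
Qed.

Lemma matching_mate_l i : i \in I -> exists j, (i, j) \in M.
Proof.
move=> iI; case: pM => _ /(_ i iI) /eqP/cards1P[h Eh] _.
have : h \in [set h in M | h.1 == i] by rewrite Eh set11.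
by rewrite inE => /andP[hM /eqP <-]; exists h.2; rewrite -surjective_pairing.
Qed.

Lemma matching_mate_r j : j \in J -> exists i, (i, j) \in M.
Proof.
move=> jJ; case: pM => _ _ /(_ j jJ) /eqP/cards1P[h Eh].
have : h \in [set h in M | h.2 == j] by rewrite Eh set11.
by rewrite inE => /andP[hM /eqP <-]; exists h.1; rewrite -surjective_pairing.
Qed.

Lemma mate_lE i j : (i, j) \in M -> mate_l M i = Some j.
Proof.
move=> ij; rewrite /mate_l; case: pickP => [j' ij' | /(_ j)]; last by rewrite ij.
by rewrite (matching_uniq_r ij ij').
Qed.

Lemma mate_rE i j : (i, j) \in M -> mate_r M j = Some i.
Proof.
move=> ij; rewrite /mate_r; case: pickP => [i' i'j | /(_ i)]; last by rewrite ij.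
by rewrite (matching_uniq_l ij i'j).
Qed.

Lemma mate_l_None i : mate_l M i = None -> i \notin I.
Proof.
rewrite /mate_l; case: pickP => // noj _; apply/negP => /matching_mate_l[j].
by rewrite noj.
Qed.

Lemma mate_r_None j : mate_r M j = None -> j \notin J.
Proof.
rewrite /mate_r; case: pickP => // noi _; apply/negP => /matching_mate_r[i].
by rewrite noi.
Qed.

Lemma card_matching_l (A : {set 'I_n}) : #|[set h in M | h.1 \in A]| = #|I :&: A|.
Proof.
rewrite -(card_in_imset (f := fst)); last first.
  move=> [i j] [i' j'] /[!inE] /andP[ij _] /andP[i'j' _] /= Ei; subst i'.
  by rewrite (matching_uniq_r ij i'j').
apply: eq_card => i; rewrite inE; apply/imsetP/andP.
  by case=> -[i' j] /[!inE] /andP[ij iA] ->; split=> //; apply: matching_memI ij.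
case=> iI iA; have [j ij] := matching_mate_l iI.
by exists (i, j); rewrite // inE ij.
Qed.

Lemma card_matching_r (B : {set 'I_d}) : #|[set h in M | h.2 \in B]| = #|J :&: B|.
Proof.
rewrite -(card_in_imset (f := snd)); last first.
  move=> [i j] [i' j'] /[!inE] /andP[ij _] /andP[i'j' _] /= Ej; subst j'.
  by rewrite (matching_uniq_l ij i'j').
apply: eq_card => j; rewrite inE; apply/imsetP/andP.
  by case=> -[i j'] /[!inE] /andP[ij jB] ->; split=> //; apply: matching_memJ ij.
case=> jJ jB; have [i ij] := matching_mate_r jJ.
by exists (i, j); rewrite // inE ij.
Qed.

End PerfectMatching.

Lemma cycle_orbit_moved (T : finType) (f : T -> T) (r : rel T) x :
  injective f -> f x != x -> (forall u, f u != u -> r u (f u)) ->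
  cycle r (orbit f x).
Proof.
move=> f_inj fx moved_r.
have moved u : u \in orbit f x -> f u != u.
  rewrite -fconnect_orbit (fconnect_sym f_inj) => /iter_findex xu.
  by apply: contra fx => /eqP fu; rewrite -xu (iter_fix _ fu) fu.
apply: (sub_in_cycle (P := mem (orbit f x))) (cycle_orbit f_inj x).
  by move=> u v uo _ /eqP <-; apply/moved_r/moved.
exact/allP.
Qed.

Definition alternate n d (M M' : graph n d) (u : vertex n d) : vertex n d :=
  match u with
  | inl i => if mate_l M i is Some j then inr j else u
  | inr j => if mate_r M' j is Some i then inl i else u
  end.

Lemma alternateK n d I J (M M' : graph n d) :
  perfect_matching I J M -> perfect_matching I J M' ->
  cancel (alternate M M') (alternate M' M).
Proof.
move=> pM pM' [i|j] /=.
- case Ei: (mate_l M i) => [j|] /=.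
    by rewrite (mate_rE pM (mate_l_some Ei)).
  case Ei': (mate_l M' i) => [j|] //.
  by move: (mate_l_None pM Ei); rewrite (matching_memI pM' (mate_l_some Ei')).
- case Ej: (mate_r M' j) => [i|] /=.
    by rewrite (mate_lE pM' (mate_r_some Ej)).
  case Ej': (mate_r M j) => [i|] //.
  by move: (mate_r_None pM' Ej); rewrite (matching_memJ pM (mate_r_some Ej')).
Qed.

Lemma acyclic_matching_subset n d I J (G M M' : graph n d) : acyclic G ->
  M \subset G -> M' \subset G ->
  perfect_matching I J M -> perfect_matching I J M' -> M \subset M'.
Proof.
move=> acG /subsetP MG /subsetP M'G pM pM'.
apply/subsetP => -[i j] ij; apply/negPn/negP => ijM'.
pose s := alternate M M'.
have [i' i'j] := matching_mate_r pM' (matching_memJ pM ij).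
have s_i : s (inl i) = inr j by rewrite /s /= (mate_lE pM ij).
have s_j : s (inr j) = inl i' by rewrite /s /= (mate_rE pM' i'j).
have ii' : inl i != inl i' :> vertex n d by apply: contraNneq ijM' => -[->].
have s_adj u : s u != u -> adj G u (s u).
  case: u => [a|b] /=.
  - case E: (mate_l M a) => [c|]; rewrite ?eqxx // => _.
    exact/MG/mate_l_some.
  - case E: (mate_r M' b) => [c|]; rewrite ?eqxx // => _.
    exact/M'G/mate_r_some.
have s_moves : s (inl i) != inl i by rewrite s_i.
have cyc := cycle_orbit_moved (can_inj (alternateK pM pM')) s_moves s_adj.
have long_orbit : 3 <= size (orbit s (inl i)).
  apply: (uniq_leq_size (s1 := [:: inl i; inr j; inl i'])).
    by rewrite /= !inE ii'.
  move=> w; rewrite !inE -fconnect_orbit => /or3P[] /eqP ->.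
  - exact: connect0.
  - by rewrite -s_i fconnect1.
  - by rewrite -s_j -s_i; apply: connect_trans (fconnect1 _ _) (fconnect1 _ _).
by have := acG _ (orbit_uniq s (inl i)) long_orbit; rewrite cyc.
Qed.

Lemma acyclic_matching_unique n d I J (G M M' : graph n d) : acyclic G ->
  M \subset G -> M' \subset G ->
  perfect_matching I J M -> perfect_matching I J M' -> M = M'.
Proof.
move=> acG MG M'G pM pM'; apply/eqP; rewrite eqEsubset.
by rewrite (acyclic_matching_subset acG MG M'G pM pM')
           (acyclic_matching_subset acG M'G MG pM' pM).
Qed.

Lemma card_matching_cut n d I J (M : graph n d)
  (I1 : {set 'I_n}) (J1 : {set 'I_d}) f : perfect_matching I J M ->
  {in M :\ f, forall h, (h.1 \in I1) = (h.2 \in J1)} ->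
  #|I :&: I1| + ((f \in M) && (f.2 \in J1)) =
  #|J :&: J1| + ((f \in M) && (f.1 \in I1)).
Proof.
move=> pM cut; rewrite -(card_matching_l pM) -(card_matching_r pM).
rewrite (cardsD1 f [set h in M | h.1 \in I1]).
rewrite (cardsD1 f [set h in M | h.2 \in J1]).
have -> : [set h in M | h.1 \in I1] :\ f = [set h in M | h.2 \in J1] :\ f.
  apply/setP => h; rewrite !inE; have [->|hf] //= := eqVneq h f.
  by case hM: (h \in M); rewrite //= cut // !inE hf.
by rewrite !inE; lia.
Qed.

Lemma compatible_of_opposite_exchange n d (G G' : graph n d) e e'
  (I1 : {set 'I_n}) (J1 : {set 'I_d}) :
  acyclic G -> e \in G -> e' \in G' -> G :\ e = G' :\ e' ->
  {in G :\ e, forall h, (h.1 \in I1) = (h.2 \in J1)} ->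
  e.1 \in I1 -> e.2 \notin J1 -> e'.1 \notin I1 -> e'.2 \in J1 ->
  compatible G G'.
Proof.
move=> acG eG e'G' EH cut e1 e2 e'1 e'2 I J M M' MG M'G' pM pM'.
have MH : M :\ e \subset G :\ e by rewrite setSD.
have M'H : M' :\ e' \subset G :\ e by rewrite EH setSD.
have := card_matching_cut pM (fun h hM => cut h (subsetP MH h hM)).
have := card_matching_cut pM' (fun h hM => cut h (subsetP M'H h hM)).
rewrite (negbTE e2) (negbTE e'1) e1 e'2 !andbF !andbT !addn0 => cardM' cardM.
have e'M' : e' \notin M' by apply/negP => e'M'; move: cardM'; rewrite e'M'; lia.
apply: (acyclic_matching_unique acG) pM pM' => //.
apply/subsetP => h hM'; apply/(subsetP (subD1set G e))/(subsetP M'H).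
by rewrite !inE hM' andbT; apply: contraNneq e'M' => <-.
Qed.

Lemma next_last (T : eqType) (x : T) (p : seq T) :
  uniq (x :: p) -> next (x :: p) (last x p) = x.
Proof.
by move=> xp_uniq; rewrite next_nth mem_last index_last // nth_default.
Qed.

Definition cycle_matching n d (s : seq (vertex n d)) : graph n d :=
  [set h | next s (inl h.1) == inr h.2].

Lemma cycle_matching_perfect n d (s : seq (vertex n d)) : uniq s ->
  {in s, forall u, is_inl (next s u) = ~~ is_inl u} ->
  perfect_matching [set i | inl i \in s] [set j | inr j \in s] (cycle_matching s).
Proof.
move=> us alt; have left_in i j : next s (inl i) = inr j -> inl i \in s.
  by rewrite next_nth; case: ifP.
split.
- apply/subsetP => -[i j]; rewrite !inE /= => /eqP ij.
  by rewrite (left_in _ _ ij) -ij mem_next (left_in _ _ ij).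
- move=> i; rewrite inE => si; have := alt _ si.
  case E: (next s (inl i)) => [//|j] _; apply/eqP/cards1P; exists (i, j).
  apply/setP => -[a b]; rewrite !inE /=.
  apply/andP/eqP => [[/eqP ab /eqP ai] | [-> ->]]; last by rewrite E.
  by subst a; move: ab; rewrite E => -[->].
- move=> j; rewrite inE => sj; have := alt _ (_ : prev s (inr j) \in s).
  rewrite next_prev // mem_prev => /(_ sj).
  case E: (prev s (inr j)) => [i|//] _; apply/eqP/cards1P; exists (i, j).
  apply/setP => -[a b]; rewrite !inE /=.
  apply/andP/eqP => [[/eqP ab /eqP bj] | [-> ->]]; last by rewrite -E next_prev.
  by subst b; move: (prev_next us (inl a)); rewrite ab E => -[->].
Qed.

Lemma not_compatible_of_parallel_exchange n d (G G' : graph n d) e e' :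
  e \in G -> e' \in G' -> e != e' -> G :\ e = G' :\ e' ->
  connect (adj (G :\ e)) (inr e.2) (inr e'.2) ->
  connect (adj (G :\ e)) (inl e'.1) (inl e.1) ->
  ~~ connect (adj (G :\ e)) (inl e.1) (inr e.2) -> ~ compatible G G'.
Proof.
case: e e' => i j [i' j'] /= eG e'G' ee' EH /connectP[p0 p0_path p0_last].
move=> /connectP[q0 q0_path q0_last] ij_apart compGG'.
move: p0_last; case: (shortenP p0_path) => p p_path p_uniq _ p_last.
move: q0_last; case: (shortenP q0_path) => q q_path q_uniq _ q_last.
set H := G :\ (i, j) in EH p_path q_path ij_apart.
pose r (u v : vertex n d) := if is_inl u then adj G u v else adj G' u v.
have HG : H \subset G by apply: subD1set.
have HG' : H \subset G' by rewrite EH subD1set.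
have Hr : subrel (adj H) r.
  by move=> [a|b] v; [exact: adj_subset HG _ _ | exact: adj_subset HG' _ _].
set s := (inr j :: p) ++ (inl i' :: q).
have s_uniq : uniq s.
  rewrite cat_uniq p_uniq q_uniq andbT; apply/hasPn => w wq; apply/negP => wp.
  move/negP: ij_apart; apply.
  have i'i : connect (adj H) (inl i') (inl i).
    by rewrite q_last; apply: (path_connect q_path); apply: mem_last.
  rewrite connect_adj_sym in i'i; apply: connect_trans i'i _.
  apply: connect_trans (path_connect q_path wq) _.
  by rewrite connect_adj_sym; apply: (path_connect p_path wp).
have s_cycle : cycle r s.
  rewrite /s cat_cons /= rcons_cat cat_path (sub_path Hr p_path) -p_last.
  rewrite {1}/r /= e'G'.
  by rewrite rcons_path (sub_path Hr q_path) -q_last /r /=.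
have r_alt u v : r u v -> is_inl v = ~~ is_inl u.
  by rewrite /r; case: u v => [?|?] [?|?].
have pM := cycle_matching_perfect s_uniq
  (fun u su => r_alt _ _ (next_cycle s_cycle su)).
have pM' : perfect_matching [set a | inl a \in s] [set b | inr b \in s]
                            (cycle_matching (rev s)).
  have rev_s (T : finType) (F : T -> vertex n d) :
      [set x | F x \in s] = [set x | F x \in rev s].
    by apply/setP => x; rewrite !inE mem_rev.
  rewrite (rev_s _ inl) (rev_s _ inr).
  apply: cycle_matching_perfect => [|u]; first by rewrite rev_uniq.
  rewrite mem_rev => su; rewrite next_rev //.
  by rewrite (r_alt _ _ (prev_cycle s_cycle su)) negbK.
have MG : cycle_matching s \subset G.
  apply/subsetP => -[a b] ab; have /[!in_set] sa := matching_memI pM ab.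
  move: ab; rewrite in_set -[(a, b).1]/a -[(a, b).2]/b => /eqP ab.
  by have := next_cycle s_cycle sa; rewrite ab.
have M'G' : cycle_matching (rev s) \subset G'.
  apply/subsetP => -[a b] ab; have /[!in_set] sa := matching_memI pM' ab.
  move: ab; rewrite in_set next_rev // -[(a, b).1]/a -[(a, b).2]/b => /eqP ab.
  by have := prev_cycle s_cycle sa; rewrite ab.
have eM : (i, j) \in cycle_matching s.
  rewrite in_set -[(i, j).1]/i -[(i, j).2]/j.
  have -> : inl i = last (inr j) (p ++ inl i' :: q).
    by rewrite last_cat /= -q_last.
  by rewrite /s cat_cons next_last // -cat_cons.
have eM' : (i, j) \notin cycle_matching (rev s).
  apply: contra ee' => /(subsetP M'G') eG'.
  apply: contraT => ne; have : (i, j) \in G' :\ (i', j') by rewrite !inE ne.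
  by rewrite -EH !inE eqxx.
by move: eM'; rewrite -(compGG' _ _ _ _ MG M'G' pM pM') eM.
Qed.

Section Exchange.
Variables (n d : nat) (G G' : graph n d) (e e' : edge n d).
Variables (I1 I2 : {set 'I_n}) (J1 J2 : {set 'I_d}).
Hypotheses (acG : acyclic G) (eG : e \in G) (e'G' : e' \in G') (ee' : e != e').
Hypothesis EH : G :\ e = G' :\ e'.
Hypotheses (C1 : is_component (G :\ e) (vset I1 J1))
           (C2 : is_component (G :\ e) (vset I2 J2)).
Hypothesis e_sides : [/\ (e.1 \in I2) = (e.1 \notin I1),
  (e.2 \in J2) = (e.2 \notin J1) & (e.2 \in J1) = (e.1 \notin I1)].
Hypothesis e'_sides : [/\ (e'.1 \in I2) = (e'.1 \notin I1),
  (e'.2 \in J2) = (e'.2 \notin J1) & (e'.2 \in J1) = (e'.1 \notin I1)].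

Lemma compatible_iff_opposite_sides :
  compatible G G' <-> (e.1 \in I1) != (e'.1 \in I1).
Proof.
case: e_sides e'_sides => eI2 eJ2 eJ1 [e'I2 e'J2 e'J1].
have cut1 := fun h => component_edge (h := h) C1.
have cut2 := fun h => component_edge (h := h) C2.
split=> [compGG' | ].
- apply/negP => /eqP same_side.
  have [e1|e1] := boolP (e.1 \in I1); move: (e1); rewrite same_side => e'1.
  + apply: (not_compatible_of_parallel_exchange eG e'G' ee' EH _ _ _ compGG').
    * apply: (component_connect C2); rewrite in_vset_r.
        by rewrite eJ2 eJ1 e1.
      by rewrite e'J2 e'J1 e'1.
    * by apply: (component_connect C1); rewrite in_vset_l.
    * by apply: (component_apart C1); rewrite ?in_vset_l // in_vset_r eJ1 e1.
  + apply: (not_compatible_of_parallel_exchange eG e'G' ee' EH _ _ _ compGG').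
    * by apply: (component_connect C1); rewrite in_vset_r ?eJ1 ?e'J1.
    * by apply: (component_connect C2); rewrite in_vset_l ?eI2 ?e'I2.
    * apply: (component_apart C2); first by rewrite in_vset_l eI2.
      by rewrite in_vset_r eJ2 eJ1 e1.
- have [e1|e1] := boolP (e.1 \in I1); move=> /= e'1.
  + apply: (compatible_of_opposite_exchange acG eG e'G' EH cut1) => //.
    * by rewrite eJ1 e1.
    * by rewrite e'J1.
  + apply: (compatible_of_opposite_exchange acG eG e'G' EH cut2).
    * by rewrite eI2.
    * by rewrite eJ2 eJ1 e1.
    * by rewrite e'I2 e'1.
    * by rewrite e'J2 e'J1 e'1.
Qed.

End Exchange.

Theorem mainTheorem1 (n d : nat) (G G' : graph n d) (e e' : edge n d)
  (I1 I2 : {set 'I_n}) (J1 J2 : {set 'I_d}) :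
  0 < n -> 0 < d ->
  spanning_tree G -> spanning_tree G' -> G != G' ->
  e \in G -> e' \in G' -> G :\ e = G' :\ e' ->
  is_component (G :\ e) (vset I1 J1) ->
  is_component (G :\ e) (vset I2 J2) ->
  vset I1 J1 != vset I2 J2 ->
  (compatible G G' <->
     ((e.1 \in I1 /\ e.2 \in J2 /\ e'.1 \in I2 /\ e'.2 \in J1) \/
      (e.1 \in I2 /\ e.2 \in J1 /\ e'.1 \in I1 /\ e'.2 \in J2)))
  /\ (compatible G G' -> e.1 != e'.1 /\ e.2 != e'.2).
Proof.
move=> _ _ [acG conG] [_ conG'] GG' eG e'G' EH C1 C2 C12.
have ee' : e != e'.
  by apply: contraNneq GG' => ee'; rewrite -(setD1K eG) -(setD1K e'G') EH ee'.
have e_sides := edge_between_components conG C1 C2 C12.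
have [C1' C2'] : is_component (G' :\ e') (vset I1 J1) /\
                 is_component (G' :\ e') (vset I2 J2) by rewrite -EH.
have e'_sides := edge_between_components conG' C1' C2' C12.
have compE :=
  compatible_iff_opposite_sides acG eG e'G' ee' EH C1 C2 e_sides e'_sides.
case: e_sides e'_sides => eI2 eJ2 eJ1 [e'I2 e'J2 e'J1]; split.
- rewrite compE eI2 eJ2 e'I2 e'J2 eJ1 e'J1.
  case: (e.1 \in I1); case: (e'.1 \in I1) => /=.
  + by split=> // -[[_ [_ []]] | []].
  + by split=> // _; left.
  + by split=> // _; right.
  + by split=> // -[[] | [_ [_ []]]].
- move=> /compE opp; split; apply: contraNneq opp => E; first by rewrite E.
  by rewrite -[e.1 \in I1]negbK -[e'.1 \in I1]negbK -eJ1 -e'J1 E.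
Qed.
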